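(* Let $e_1,\dots,e_m$ ($m\ge2$) be training domains, $\mathcal{F}$ a class of predictors, and for $f\in\mathcal{F}$ let $\mathcal{R}^{e_1}(f),\dots,\mathcal{R}^{e_m}(f)\in\mathbb{R}$ be its risks, with sample mean $\hat\mu_f$ and sample standard deviation $\hat\sigma_f=\big(\frac{1}{m-1}\sum_{i}(\mathcal{R}^{e_i}(f)-\hat\mu_f)^2\big)^{1/2}$. For each $f$ let $h_f\ge0$ be a data-dependent bandwidth such that, for every sequence $(f_k)$ in $\mathcal{F}$, $h_{f_k}\to0$ implies $\hat\sigma_{f_k}\to0$ (e.g. $h_f=(4/(3m))^{0.2}\hat\sigma_f$). Define the kernel estimate $\hat F_{\mathrm{KDE},f}(x)=\frac1m\sum_{i=1}^m\Phi\big(\frac{x-\mathcal{R}^{e_i}(f)}{h_f}\big)$, with $\Phi$ the standard normal CDF, its quantile function $\hat F^{-1}_{\mathrm{KDE},f}(\alpha)=\inf\{x:\hat F_{\mathrm{KDE},f}(x)\ge\alpha\}$, and for $\alpha\in(0,1)$ let $\hat f_\alpha\in\arg\min_{f\in\mathcal{F}}\hat F^{-1}_{\mathrm{KDE},f}(\alpha)$ (assumed to exist). For $f\in\mathcal{F}$ let $R^*_f:=\min_{i\in[m]}\mathcal{R}^{e_i}(f)$. Assume 1. $\mathcal{F}$ contains an invariant-risk predictor $f_0$ with finite training risks, i.e. $\hat\sigma_{f_0}=0$ and each $\mathcal{R}^{e_i}(f_0)<\infty$; and 2. $R_*:=\inf_{f\in\mathcal{F},\,i\in[m]}\mathcal{R}^{e_i}(f)>-\infty$.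 Then $\lim_{\alpha\to1}\hat\sigma_{\hat f_\alpha}=0$ and $\limsup_{\alpha\to1}R^*_{\hat f_\alpha}\le R^*_{f_0}$.
   Context: When $h_f=0$, the term $\Phi\big(\frac{x-r}{0}\big)$ is interpreted as the indicator $1\{x\ge r\}$, so that $\hat F_{\mathrm{KDE},f}$ is the empirical CDF of the risks (point masses).
   Formalization: The bandwidth $h_f$ of the invariant-risk predictor f₀ is also taken to be 0, in addition to $\hat\sigma_{f_0}=0$ in assumption 1. The statement above fails without it. *)

From Stdlib Require Import Reals Lra List.
From Coquelicot Require Import Coquelicot.
Open Scope R_scope.

Definition sumR (m : nat) (g : nat -> R) : R :=
  fold_right Rplus 0 (map g (seq 0 m)).

Definition minR (m : nat) (g : nat -> R) : R :=
  fold_right Rmin (g 0%nat) (map g (seq 0 m)).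

Definition mu_hat (m : nat) (r : nat -> R) : R := / INR m * sumR m r.
Definition sigma_hat (m : nat) (r : nat -> R) : R :=
  sqrt (/ INR (m - 1) * sumR m (fun i => (r i - mu_hat m r) ^ 2)).

Definition Phi (x : R) : R :=
  RInt_gen (fun t => / sqrt (2 * PI) * exp (- (t ^ 2) / 2))
           (Rbar_locally m_infty) (at_point x).

(* kernel term Phi((x - r)/h), read as the indicator 1{x >= r} when h = 0 *)
Definition kern (h x r : R) : R :=
  if Req_EM_T h 0 then (if Rle_dec r x then 1 else 0) else Phi ((x - r) / h).

Definition F_KDE (m : nat) (r : nat -> R) (h x : R) : R :=
  / INR m * sumR m (fun i => kern h x (r i)).

Definition Q_KDE (m : nat) (r : nat -> R) (h alpha : R) : Rbar :=
  Glb_Rbar (fun x => alpha <= F_KDE m r h x).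

From Stdlib Require Import Reals Lra Lia List Classical ClassicalEpsilon.
From Coquelicot Require Import Coquelicot.
Open Scope R_scope.

(* Since the risks of f0 have zero spread, they all equal r0 := mu_hat, and with h f0 = 0 the
   KDE of f0 is the point mass at r0, whose alpha-quantile is at most r0. By minimality of
   fhat alpha there is then a point y < r0 + d where the KDE of fhat alpha reaches alpha.
   Because every kernel term is at most 1, each term is at least 1 - m (1 - alpha), which
   for alpha close to 1 exceeds Phi T for any prescribed T; hence R_i + T h <= y for every
   risk R_i of fhat alpha. With T = 0 this bounds the risks of fhat alpha by r0 + d; with T
   large, the uniform lower bound B on the risks forces h (fhat alpha) -> 0, and the
   bandwidth hypothesis, used along sequences alpha_n -> 1, yields sigma_hat -> 0.
   The bound Phi < 1 needs the Gaussian integral, obtained from the classical identity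
   (int_0^x e^(-t^2/2) dt)^2 + 2 int_0^1 e^(-x^2 (1+t^2)/2) / (1+t^2) dt = PI / 2. *)

Definition gauss (t : R) : R := exp (- (t ^ 2) / 2).
Definition gauss_int (x : R) : R := RInt gauss 0 x.
Definition gauss_aux (x t : R) : R := exp (- (x ^ 2 * (1 + t ^ 2)) / 2) / (1 + t ^ 2).

Lemma one_add_sqr_pos (t : R) : 0 < 1 + t ^ 2.
Proof. pose proof (pow2_ge_0 t); lra. Qed.

Lemma continuous_gauss (x : R) : continuous gauss x.
Proof. apply (ex_derive_continuous (V := R_NormedModule)); unfold gauss; auto_derive; auto. Qed.

Lemma ex_RInt_gauss (a b : R) : ex_RInt gauss a b.
Proof. apply (ex_RInt_continuous (V := R_CompleteNormedModule)); intros; apply continuous_gauss. Qed.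

Lemma is_derive_gauss_int (x : R) : is_derive gauss_int x (gauss x).
Proof.
  apply is_derive_RInt with (a := 0); [|apply continuous_gauss].
  apply filter_forall; intros b; apply (RInt_correct (V := R_CompleteNormedModule)), ex_RInt_gauss.
Qed.

Lemma gauss_int_lt (x y : R) : x < y -> gauss_int x < gauss_int y.
Proof.
  intros Hxy.
  assert (Hpos : 0 < RInt gauss x y).
  { apply RInt_gt_0; [exact Hxy | intros; apply exp_pos | intros; apply continuous_gauss]. }
  unfold gauss_int.
  rewrite <- (RInt_Chasles (V := R_CompleteNormedModule) gauss 0 x y) by apply ex_RInt_gauss.
  change (RInt gauss 0 x < RInt gauss 0 x + RInt gauss x y); lra.
Qed.

Lemma gauss_int_le (x y : R) : x <= y -> gauss_int x <= gauss_int y.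
Proof. intros [Hxy | ->]; [now apply Rlt_le, gauss_int_lt | apply Rle_refl]. Qed.

Lemma is_derive_gauss_aux (x t : R) :
  is_derive (fun x => gauss_aux x t) x (- x * exp (- (x ^ 2 * (1 + t ^ 2)) / 2)).
Proof.
  pose proof (one_add_sqr_pos t). unfold gauss_aux. auto_derive; [lra|].
  replace (- (x * (x * 1) * (1 + t * (t * 1))) * / 2) with (- (x ^ 2 * (1 + t ^ 2)) / 2)
    by (unfold Rdiv; ring).
  replace (1 + t * (t * 1)) with (1 + t ^ 2) by ring. field; lra.
Qed.

Lemma ex_RInt_gauss_aux (x a b : R) : ex_RInt (gauss_aux x) a b.
Proof.
  apply (ex_RInt_continuous (V := R_CompleteNormedModule)); intros z _.
  apply (ex_derive_continuous (V := R_NormedModule)); unfold gauss_aux.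
  pose proof (one_add_sqr_pos z); auto_derive; lra.
Qed.

Lemma RInt_partial_gauss_aux (x : R) :
  RInt (fun t => - x * exp (- (x ^ 2 * (1 + t ^ 2)) / 2)) 0 1 = - gauss x * gauss_int x.
Proof.
  (* substitute s = x t: the integrand is - gauss x * (x * gauss (x t)) *)
  rewrite (RInt_ext _ (fun t => scal (- gauss x) (scal x (gauss (x * t + 0))))).
  2: { intros t _. change (- x * exp (- (x ^ 2 * (1 + t ^ 2)) / 2)
                           = - gauss x * (x * gauss (x * t + 0))).
       unfold gauss. replace (- (x ^ 2 * (1 + t ^ 2)) / 2) with (- x ^ 2 / 2 + - (x * t + 0) ^ 2 / 2)
         by field.
       rewrite exp_plus; ring. }
  rewrite (RInt_scal (V := R_CompleteNormedModule) (fun t => scal x (gauss (x * t + 0)))).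
  - rewrite (RInt_comp_lin (V := R_CompleteNormedModule)); [|apply ex_RInt_gauss].
    unfold gauss_int. rewrite Rmult_0_r, Rmult_1_r, !Rplus_0_r. reflexivity.
  - change (ex_RInt (fun t => x * gauss (x * t + 0)) 0 1).
    apply (ex_RInt_continuous (V := R_CompleteNormedModule)); intros z _.
    apply (ex_derive_continuous (V := R_NormedModule)); unfold gauss; auto_derive; auto.
Qed.

Lemma is_derive_RInt_gauss_aux (x : R) :
  is_derive (fun x => RInt (gauss_aux x) 0 1) x (- gauss x * gauss_int x).
Proof.
  rewrite <- RInt_partial_gauss_aux.
  set (d := fun u v => - u * exp (- (u ^ 2 * (1 + v ^ 2)) / 2)).
  assert (Hd : forall u v, Derive (fun z => gauss_aux z v) u = d u v).
  { intros; apply is_derive_unique, is_derive_gauss_aux. }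
  rewrite (RInt_ext _ (fun t => Derive (fun u => gauss_aux u t) x)) by (intros; symmetry; apply Hd).
  apply is_derive_RInt_param.
  - apply filter_forall; intros y t _; eexists; apply is_derive_gauss_aux.
  - intros t _. apply continuity_2d_pt_ext with d; [intros; symmetry; apply Hd|].
    unfold d; simpl.
    repeat first
      [ apply continuity_2d_pt_mult | apply continuity_2d_pt_opp | apply continuity_2d_pt_plus
      | apply continuity_2d_pt_id1 | apply continuity_2d_pt_id2 | apply continuity_2d_pt_const
      | apply continuity_1d_2d_pt_comp; [apply derivable_continuous_pt, derivable_pt_exp|] ].
  - apply filter_forall; intros y; apply ex_RInt_gauss_aux.
Qed.

Lemma RInt_gauss_aux_0 : RInt (gauss_aux 0) 0 1 = PI / 4.
Proof.
  rewrite (RInt_ext _ (fun t => / (1 + t ^ 2))).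
  2: { intros t _. unfold gauss_aux. replace (- (0 ^ 2 * (1 + t ^ 2)) / 2) with 0 by field.
       rewrite exp_0. apply Rdiv_1_l. }
  rewrite (is_RInt_unique _ _ _ (atan 1 - atan 0)).
  - rewrite atan_1, atan_0. apply Rminus_0_r.
  - apply (is_RInt_derive (V := R_CompleteNormedModule) atan).
    + intros y _. apply is_derive_Reals, derivable_pt_lim_atan.
    + intros y _. apply (ex_derive_continuous (V := R_NormedModule)).
      pose proof (one_add_sqr_pos y). auto_derive. lra.
Qed.

(* The left-hand side has derivative 0 and equals PI / 2 at x = 0. *)
Lemma gauss_int_sqr_add (x : R) : gauss_int x ^ 2 + 2 * RInt (gauss_aux x) 0 1 = PI / 2.
Proof.
  set (lhs := fun x => gauss_int x ^ 2 + 2 * RInt (gauss_aux x) 0 1).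
  assert (Hlhs_derive : forall y, is_derive lhs y 0).
  { intros y.
    assert (Hd := is_derive_plus (V := R_NormedModule) _ _ y _ _
                    (is_derive_pow _ 2 _ _ (is_derive_gauss_int y))
                    (is_derive_scal _ _ 2 _ (is_derive_RInt_gauss_aux y))).
    replace (plus _ _) with 0 in Hd by (change (0 = INR 2 * gauss y * gauss_int y ^ 1 +
                                         2 * (- gauss y * gauss_int y)); simpl; ring).
    exact Hd. }
  assert (Hlhs0 : lhs 0 = PI / 2).
  { unfold lhs, gauss_int. rewrite RInt_gauss_aux_0, RInt_point.
    change (0 ^ 2 + 2 * (PI / 4) = PI / 2). field. }
  rewrite <- Hlhs0. fold (lhs x).
  destruct (Rtotal_order x 0) as [Hx | [-> | Hx]]; [| reflexivity |].
  - apply (eq_is_derive (V := R_NormedModule)); [intros; apply Hlhs_derive | exact Hx].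
  - symmetry; apply (eq_is_derive (V := R_NormedModule)); [intros; apply Hlhs_derive | exact Hx].
Qed.

Lemma gauss_int_abs_le (x : R) : Rabs (gauss_int x) <= sqrt (PI / 2).
Proof.
  assert (Haux : 0 <= RInt (gauss_aux x) 0 1).
  { apply RInt_ge_0; [lra | apply ex_RInt_gauss_aux | intros t _].
    apply Rlt_le, Rdiv_lt_0_compat; [apply exp_pos | apply one_add_sqr_pos]. }
  rewrite <- sqrt_Rsqr_abs. apply sqrt_le_1_alt.
  pose proof (gauss_int_sqr_add x) as Hsum. unfold Rsqr. simpl in Hsum. lra.
Qed.

Lemma monotone_lim_m_infty (f : R -> R) (M : R) :
  (forall x y, x <= y -> f x <= f y) -> (forall x, M <= f x) ->
  exists l, M <= l /\ filterlim f (Rbar_locally m_infty) (locally l).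
Proof.
  intros Hmono HM.
  set (E := fun z => exists x, z = - f x).
  assert (HE_ub : is_upper_bound E (- M)) by (intros z [x ->]; specialize (HM x); lra).
  destruct (completeness E (ex_intro _ _ HE_ub) (ex_intro _ _ (ex_intro _ 0 eq_refl)))
    as [L [HL_ub HL_least]].
  exists (- L). split; [specialize (HL_least _ HE_ub); lra|].
  apply filterlim_locally; intros eps.
  destruct (not_all_not_ex _ (fun x => L - eps < - f x)) as [x0 Hx0].
  { intros Hnone. pose proof (cond_pos eps).
    enough (L <= L - eps) by lra.
    apply HL_least. intros z [x ->]. apply Rnot_lt_le, Hnone. }
  exists x0. intros x Hx.
  assert (- f x <= L) by (apply HL_ub; exists x; reflexivity).
  specialize (Hmono x x0 (Rlt_le _ _ Hx)).
  change (Rabs (f x - - L) < eps). apply Rabs_def1; lra.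
Qed.

Lemma Phi_gauss_int :
  exists l, - sqrt (PI / 2) <= l /\ forall x, Phi x = / sqrt (2 * PI) * (gauss_int x - l).
Proof.
  destruct (monotone_lim_m_infty gauss_int (- sqrt (PI / 2)) gauss_int_le) as [l [Hl Hlim]].
  { intros x. pose proof (gauss_int_abs_le x) as Hx. apply Rabs_le_between in Hx. lra. }
  exists l. split; [exact Hl|]. intros x.
  apply (is_RInt_gen_unique (V := R_CompleteNormedModule)),
        (is_RInt_gen_scal (V := R_NormedModule)).
  assert (Hg : forall t, Derive gauss_int t = gauss t).
  { intros t. apply is_derive_unique, is_derive_gauss_int. }
  apply (is_RInt_gen_ext (Derive gauss_int)); [apply filter_forall; intros ab t _; apply Hg|].
  apply (is_RInt_gen_Derive (Fa := Rbar_locally m_infty) (Fb := at_point x)).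
  - apply filter_forall; intros ab t _. eexists; apply is_derive_gauss_int.
  - apply filter_forall; intros ab t _. apply (continuous_ext gauss); [intros; symmetry; apply Hg|].
    apply continuous_gauss.
  - exact Hlim.
  - intros P HP. apply locally_singleton in HP. exact HP.
Qed.

Lemma Phi_le (x y : R) : x <= y -> Phi x <= Phi y.
Proof.
  intros Hxy. destruct Phi_gauss_int as [l [_ HPhi]]. rewrite !HPhi.
  apply Rmult_le_compat_l.
  - apply Rlt_le, Rinv_0_lt_compat, sqrt_lt_R0. pose proof PI_RGT_0. lra.
  - pose proof (gauss_int_le x y Hxy). lra.
Qed.

(* Both ends of [gauss_int] are within [sqrt (PI / 2)] of 0, and [gauss_int] is strictly
   increasing, so [Phi x < Phi (x + 1) <= 1]. *)
Lemma Phi_lt_1 (x : R) : Phi x < 1.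
Proof.
  destruct Phi_gauss_int as [l [Hl HPhi]]. rewrite HPhi.
  assert (Hs : 0 < sqrt (PI / 2)) by (apply sqrt_lt_R0; pose proof PI_RGT_0; lra).
  assert (H2PI : sqrt (2 * PI) = 2 * sqrt (PI / 2)).
  { replace (2 * PI) with (2 ^ 2 * (PI / 2)) by field.
    rewrite sqrt_mult, sqrt_pow2; pose proof PI_RGT_0; lra. }
  pose proof (gauss_int_lt x (x + 1) ltac:(lra)).
  pose proof (gauss_int_abs_le (x + 1)) as Habs. apply Rabs_le_between in Habs.
  rewrite H2PI. apply (Rmult_lt_reg_l (2 * sqrt (PI / 2))); [lra|].
  rewrite <- Rmult_assoc, Rinv_r by lra. lra.
Qed.

Lemma fold_right_Rplus_init (a : R) (l : list R) :
  fold_right Rplus a l = fold_right Rplus 0 l + a.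
Proof. induction l as [|b l IH]; simpl; [ring | rewrite IH; ring]. Qed.

Lemma sumR_S (m : nat) (g : nat -> R) : sumR (S m) g = sumR m g + g m.
Proof.
  unfold sumR. rewrite seq_S, map_app, fold_right_app. simpl.
  rewrite fold_right_Rplus_init. ring.
Qed.

Lemma sumR_ext (m : nat) (g1 g2 : nat -> R) :
  (forall i, (i < m)%nat -> g1 i = g2 i) -> sumR m g1 = sumR m g2.
Proof.
  intros Heq. unfold sumR. f_equal. apply map_ext_in. intros i Hi. apply in_seq in Hi.
  apply Heq; lia.
Qed.

Lemma sumR_const (m : nat) (c : R) : sumR m (fun _ => c) = INR m * c.
Proof. induction m as [|m IH]; [unfold sumR; simpl; ring | rewrite sumR_S, IH, S_INR; ring]. Qed.

Lemma sumR_le_compat (m : nat) (g1 g2 : nat -> R) :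
  (forall i, (i < m)%nat -> g1 i <= g2 i) -> sumR m g1 <= sumR m g2.
Proof.
  induction m as [|m IH]; intros Hle; [unfold sumR; simpl; lra|]. rewrite !sumR_S.
  pose proof (Hle m ltac:(lia)). pose proof (IH (fun i Hi => Hle i ltac:(lia))). lra.
Qed.

Lemma sumR_nonneg_ge (m : nat) (g : nat -> R) (k : nat) :
  (forall i, (i < m)%nat -> 0 <= g i) -> (k < m)%nat -> g k <= sumR m g.
Proof.
  induction m as [|m IH]; intros Hg Hk; [lia|]. rewrite sumR_S.
  destruct (Nat.eq_dec k m) as [-> | Hkm].
  - pose proof (sumR_le_compat m (fun _ => 0) g (fun i Hi => Hg i ltac:(lia))) as Hsum.
    rewrite sumR_const in Hsum. lra.
  - pose proof (IH (fun i Hi => Hg i ltac:(lia)) ltac:(lia)). pose proof (Hg m ltac:(lia)). lra.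
Qed.

Lemma sumR_le_bounded (m : nat) (g : nat -> R) (c : R) (k : nat) :
  (forall i, (i < m)%nat -> g i <= c) -> (k < m)%nat -> sumR m g + c <= g k + INR m * c.
Proof.
  induction m as [|m IH]; intros Hg Hk; [lia|]. rewrite sumR_S, S_INR.
  destruct (Nat.eq_dec k m) as [-> | Hkm].
  - pose proof (sumR_le_compat m g (fun _ => c) (fun i Hi => Hg i ltac:(lia))) as Hsum.
    rewrite sumR_const in Hsum. lra.
  - pose proof (IH (fun i Hi => Hg i ltac:(lia)) ltac:(lia)). pose proof (Hg m ltac:(lia)). lra.
Qed.

Lemma minR_le (m : nat) (g : nat -> R) (k : nat) : (k < m)%nat -> minR m g <= g k.
Proof.
  intros Hk. unfold minR.
  assert (Hin : In (g k) (map g (seq 0 m))) by (apply in_map, in_seq; lia).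
  induction (map g (seq 0 m)) as [|a l IH]; simpl in *; [contradiction|].
  destruct Hin as [-> | Hin]; [apply Rmin_l | eapply Rle_trans; [apply Rmin_r | auto]].
Qed.

Lemma le_minR (m : nat) (g : nat -> R) (c : R) :
  (0 < m)%nat -> (forall i, (i < m)%nat -> c <= g i) -> c <= minR m g.
Proof.
  intros Hm Hg. unfold minR.
  assert (Hl : forall x, In x (map g (seq 0 m)) -> c <= x).
  { intros x Hx. apply in_map_iff in Hx as [i [<- Hi]]. apply in_seq in Hi. apply Hg; lia. }
  pose proof (Hg 0%nat Hm) as H0.
  induction (map g (seq 0 m)) as [|a l IH]; simpl in *; [exact H0|].
  apply Rmin_glb; auto.
Qed.

Lemma sigma_hat_eq0 (m : nat) (r : nat -> R) :
  (2 <= m)%nat -> sigma_hat m r = 0 -> forall i, (i < m)%nat -> r i = mu_hat m r.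
Proof.
  intros Hm Hsigma i Hi.
  set (g := fun i => (r i - mu_hat m r) ^ 2).
  assert (Hm1 : 0 < / INR (m - 1)) by (apply Rinv_0_lt_compat, lt_0_INR; lia).
  assert (Hsum : sumR m g <= 0).
  { apply Rnot_lt_le. intros Hpos. unfold sigma_hat in Hsigma. fold g in Hsigma.
    pose proof (sqrt_lt_R0 _ (Rmult_lt_0_compat _ _ Hm1 Hpos)). lra. }
  pose proof (sumR_nonneg_ge m g i (fun j _ => pow2_ge_0 _) Hi).
  pose proof (pow2_ge_0 (r i - mu_hat m r)). unfold g in *. nra.
Qed.

Lemma kern_le_1 (h x r : R) : kern h x r <= 1.
Proof.
  unfold kern. destruct (Req_EM_T h 0); [destruct (Rle_dec r x); lra | apply Rlt_le, Phi_lt_1].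
Qed.

Lemma kern_gt_shift_le (h y r T : R) :
  0 <= h -> Rmax 0 (Phi T) < kern h y r -> r + T * h <= y.
Proof.
  intros Hh Hk. pose proof (Rmax_l 0 (Phi T)). pose proof (Rmax_r 0 (Phi T)).
  unfold kern in Hk. destruct (Req_EM_T h 0) as [-> | Hh0].
  - destruct (Rle_dec r y); lra.
  - assert (Hlt : T < (y - r) / h).
    { apply Rnot_le_lt. intros Hle. pose proof (Phi_le _ _ Hle). lra. }
    apply (Rmult_lt_compat_r h) in Hlt; [|lra].
    unfold Rdiv in Hlt. rewrite Rmult_assoc, Rinv_l in Hlt by lra. lra.
Qed.

Lemma kern_ge_of_F_KDE_ge (m : nat) (r : nat -> R) (h y alpha : R) (k : nat) :
  (k < m)%nat -> alpha <= F_KDE m r h y -> 1 - INR m * (1 - alpha) <= kern h y (r k).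
Proof.
  intros Hk HF. unfold F_KDE in HF.
  assert (Hm : 0 < INR m) by (apply lt_0_INR; lia).
  pose proof (sumR_le_bounded m (fun i => kern h y (r i)) 1 k (fun i _ => kern_le_1 _ _ _) Hk)
    as Hsum.
  apply (Rmult_le_compat_l (INR m)) in HF; [|lra].
  rewrite <- Rmult_assoc, Rinv_r, Rmult_1_l in HF by lra. lra.
Qed.

Lemma F_KDE_ge_shift_le (m : nat) (T : R) : (0 < m)%nat ->
  at_left 1 (fun alpha => forall r h y, 0 <= h -> alpha <= F_KDE m r h y ->
    forall i, (i < m)%nat -> r i + T * h <= y).
Proof.
  intros Hm. assert (Hm' : 0 < INR m) by (apply lt_0_INR; lia).
  assert (Hp : Rmax 0 (Phi T) < 1) by (apply Rmax_lub_lt; [lra | apply Phi_lt_1]).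
  assert (Hd : 0 < (1 - Rmax 0 (Phi T)) / INR m) by (apply Rdiv_lt_0_compat; lra).
  exists (mkposreal _ Hd). intros alpha Hball _ r h y Hh HF i Hi.
  apply kern_gt_shift_le; [exact Hh|].
  eapply Rlt_le_trans; [|apply (kern_ge_of_F_KDE_ge m r h y alpha i Hi HF)].
  change (Rabs (alpha - 1) < (1 - Rmax 0 (Phi T)) / INR m) in Hball.
  apply Rabs_def2 in Hball as [_ Hball].
  assert (Hmd : INR m * ((1 - Rmax 0 (Phi T)) / INR m) = 1 - Rmax 0 (Phi T)) by (field; lra).
  nra.
Qed.

Lemma Q_KDE_point_mass (m : nat) (r : nat -> R) (c alpha : R) :
  (0 < m)%nat -> (forall i, (i < m)%nat -> r i = c) -> alpha <= 1 ->
  Rbar_le (Q_KDE m r 0 alpha) c.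
Proof.
  intros Hm Hr Halpha. apply (proj1 (Glb_Rbar_correct _)).
  unfold F_KDE. rewrite (sumR_ext _ _ (fun _ => 1)), sumR_const.
  - rewrite Rmult_1_r, Rinv_l; [exact Halpha | apply not_0_INR; lia].
  - intros i Hi. rewrite Hr by exact Hi. unfold kern.
    destruct (Req_EM_T 0 0) as [_ | []]; [|reflexivity]. destruct (Rle_dec c c); lra.
Qed.

Lemma F_KDE_ge_near_quantile (m : nat) (r : nat -> R) (h alpha c d : R) :
  Rbar_le (Q_KDE m r h alpha) c -> 0 < d -> exists y, y < c + d /\ alpha <= F_KDE m r h y.
Proof.
  intros HQ Hd. apply NNPP. intros Hnone.
  assert (Hlb : Rbar_le (c + d) (Q_KDE m r h alpha)).
  { apply (proj2 (Glb_Rbar_correct _)). intros x Hx. apply Rnot_lt_le. intros Hlt.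
    apply Hnone. exists x. split; assumption. }
  pose proof (Rbar_le_trans _ _ _ Hlb HQ) as Hcd. simpl in Hcd. lra.
Qed.

Lemma filterlim_at_left_seq (a l l' : R) (u v : R -> R) :
  (forall s : nat -> R, is_lim_seq (fun n => u (s n)) l -> is_lim_seq (fun n => v (s n)) l') ->
  filterlim u (at_left a) (locally l) -> filterlim v (at_left a) (locally l').
Proof.
  intros Hseq Hu. apply filterlim_locally. intros eps. apply NNPP. intros Hnot.
  assert (Hbad : forall n : nat, exists x,
             Rabs (x - a) < / (INR n + 1) /\ x < a /\ ~ ball l' eps (v x)).
  { intros n. apply NNPP. intros Hnone. apply Hnot.
    assert (Hpos : 0 < / (INR n + 1)) by (apply Rinv_0_lt_compat; pose proof (pos_INR n); lra).
    exists (mkposreal _ Hpos). intros x Hx Hxa. apply NNPP. intros Hv.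
    apply Hnone. exists x. repeat split; assumption. }
  destruct (choice _ Hbad) as [s Hs].
  assert (Hs_lim : filterlim s eventually (at_left a)).
  { intros P [delta Hdelta].
    destruct (archimed_cor1 delta (cond_pos delta)) as [N [HN HN0]].
    exists N. intros n Hn. destruct (Hs n) as [Hsn [Hsa _]]. apply Hdelta; [|exact Hsa].
    change (Rabs (s n - a) < delta). eapply Rlt_trans; [exact Hsn|].
    eapply Rle_lt_trans; [|exact HN].
    apply Rinv_le_contravar; [apply lt_0_INR; lia | apply le_INR in Hn; lra]. }
  assert (Hus : is_lim_seq (fun n => u (s n)) l) by (eapply filterlim_comp; eassumption).
  pose proof (Hseq s Hus) as Hv. apply is_lim_seq_spec in Hv. destruct (Hv eps) as [N HN].
  destruct (Hs N) as [_ [_ HvN]]. exact (HvN (HN N (le_n N))).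
Qed.

Lemma filterlim_0_of_shift_bounded {F : (R -> Prop) -> Prop} {FF : Filter F}
  (rho eta : R -> R) (B c : R) :
  (forall a, 0 <= eta a) -> (forall a, B <= rho a) ->
  (forall T, F (fun a => rho a + T * eta a <= c)) -> filterlim eta F (locally 0).
Proof.
  intros Heta HB Hshift. apply filterlim_locally; intros eps.
  assert (Heps : 0 < eps / 2) by (pose proof (cond_pos eps); lra).
  set (T := Rmax 1 (c - B) / (eps / 2)).
  assert (HT : T * (eps / 2) = Rmax 1 (c - B)) by (unfold T; field; lra).
  pose proof (Rmax_l 1 (c - B)). pose proof (Rmax_r 1 (c - B)).
  eapply filter_imp; [|exact (Hshift T)]. intros a Ha.
  specialize (HB a). specialize (Heta a).
  assert (Hlt : eta a <= eps / 2).
  { apply (Rmult_le_reg_l T); [apply Rdiv_lt_0_compat; lra | lra]. }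
  change (Rabs (eta a - 0) < eps). rewrite Rminus_0_r, Rabs_pos_eq by lra. lra.
Qed.

Lemma eventually_risks_shift_le (m : nat) (Fc : Type) (Risk : Fc -> nat -> R) (h : Fc -> R)
  (fhat : R -> Fc) (f0 : Fc) (r0 : R) :
  (0 < m)%nat -> (forall f, 0 <= h f) ->
  (forall alpha, 0 < alpha < 1 -> forall f,
      Rbar_le (Q_KDE m (Risk (fhat alpha)) (h (fhat alpha)) alpha)
              (Q_KDE m (Risk f) (h f) alpha)) ->
  h f0 = 0 -> (forall i, (i < m)%nat -> Risk f0 i = r0) ->
  forall T d, 0 < d ->
  at_left 1 (fun alpha =>
    forall i, (i < m)%nat -> Risk (fhat alpha) i + T * h (fhat alpha) <= r0 + d).
Proof.
  intros Hm Hh_nonneg Hfhat Hhf0 Hr0 T d Hd.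
  assert (Hunit : at_left 1 (fun alpha => 0 < alpha < 1)).
  { exists (mkposreal 1 Rlt_0_1). intros alpha Hball Hlt.
    change (Rabs (alpha - 1) < 1) in Hball. apply Rabs_def2 in Hball. lra. }
  eapply filter_imp; [|exact (filter_and _ _ Hunit (F_KDE_ge_shift_le m T Hm))].
  intros alpha [Halpha Hshift].
  assert (HQ : Rbar_le (Q_KDE m (Risk (fhat alpha)) (h (fhat alpha)) alpha) r0).
  { eapply Rbar_le_trans; [exact (Hfhat alpha Halpha f0)|].
    rewrite Hhf0. apply Q_KDE_point_mass; [exact Hm | exact Hr0 | lra]. }
  destruct (F_KDE_ge_near_quantile _ _ _ _ _ _ HQ Hd) as [y [Hy HF]].
  intros i Hi. pose proof (Hshift _ _ _ (Hh_nonneg _) HF i Hi). lra.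
Qed.

Theorem propositionA5
  (m : nat) (Hm : (2 <= m)%nat)
  (Fc : Type)                       (* the class of predictors *)
  (Risk : Fc -> nat -> R)           (* Risk f i = R^{e_(i+1)}(f), i < m *)
  (h : Fc -> R)                     (* bandwidths *)
  (Hh_nonneg : forall f, 0 <= h f)
  (Hh_seq : forall u : nat -> Fc,
      is_lim_seq (fun k => h (u k)) 0 ->
      is_lim_seq (fun k => sigma_hat m (Risk (u k))) 0)
  (fhat : R -> Fc)
  (Hfhat : forall alpha, 0 < alpha < 1 -> forall f,
      Rbar_le (Q_KDE m (Risk (fhat alpha)) (h (fhat alpha)) alpha)
              (Q_KDE m (Risk f) (h f) alpha))
  (f0 : Fc)
  (Hf0 : sigma_hat m (Risk f0) = 0)
  (Hhf0 : h f0 = 0)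
  (Hbdd : exists B : R, forall f i, (i < m)%nat -> B <= Risk f i) :
  filterlim (fun alpha => sigma_hat m (Risk (fhat alpha))) (at_left 1) (locally 0)
  /\ (forall eps : R, 0 < eps ->
        at_left 1 (fun alpha =>
          minR m (Risk (fhat alpha)) <= minR m (Risk f0) + eps)).
Proof.
  assert (Hm0 : (0 < m)%nat) by lia.
  set (r0 := mu_hat m (Risk f0)).
  pose proof (sigma_hat_eq0 m (Risk f0) Hm Hf0) as Hr0. fold r0 in Hr0.
  pose proof (eventually_risks_shift_le m Fc Risk h fhat f0 r0 Hm0 Hh_nonneg Hfhat Hhf0 Hr0)
    as Hshift.
  split.
  - apply (filterlim_at_left_seq 1 0 0 (fun alpha => h (fhat alpha)));
      [intros s; apply (Hh_seq (fun n => fhat (s n)))|].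
    destruct Hbdd as [B HB].
    apply (filterlim_0_of_shift_bounded (fun alpha => Risk (fhat alpha) 0%nat) _ B (r0 + 1));
      [intros; apply Hh_nonneg | intros; apply HB, Hm0 | intros T].
    eapply filter_imp; [|exact (Hshift T 1 Rlt_0_1)]. intros alpha Halpha. apply Halpha, Hm0.
  - intros eps Heps. eapply filter_imp; [|exact (Hshift 0 eps Heps)]. intros alpha Halpha.
    pose proof (Halpha 0%nat Hm0). pose proof (minR_le m (Risk (fhat alpha)) 0 Hm0).
    pose proof (le_minR m (Risk f0) r0 Hm0 (fun i Hi => Req_le _ _ (eq_sym (Hr0 i Hi)))).
    rewrite Rmult_0_l in *. lra.
Qed.
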